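(* Let $\mathcal{A}$ be a finite real linear hyperplane arrangement of rank $r\le3$. Then $P_{\mathcal{A}}(z)$ is real-rooted.
   Context: Flats of $\mathcal{A}$ are intersections of subsets of its hyperplanes, forming a lattice under inclusion with minimum $\bot=\bigcap\mathcal{A}$ and Möbius function $\mu$; the rank of $\mathcal{A}$ is the rank of this lattice (the codimension of $\bot$). $P_{\mathcal{A}}(z)=\sum_{\mathrm{X}}|\mu(\bot,\mathrm{X})|(z-1)^{\operatorname{codim}\mathrm{X}}$. No simpliciality is assumed. *)

From HB Require Import structures.
From mathcomp Require Import all_boot all_order all_algebra.
From mathcomp Require Import reals.
Set Implicit Arguments. Unset Strict Implicit. Unset Printing Implicit Defensive.
Import Order.TTheory GRing.Theory Num.Theory.
Local Open Scope ring_scope.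

(* A finite real linear hyperplane arrangement in R^n with m hyperplanes is
   given by nonzero normal vectors a i : 'cV[R]_n; the i-th hyperplane is
   H_i = {x : 'rV_n | x *m a i = 0}, represented (as a row space) by
   kermx (a i).  Repetitions of hyperplanes are harmless: everything below
   only depends on the set of hyperplanes. *)

Section Arrangement.
Variables (R : realType) (n m : nat) (a : 'I_m -> 'cV[R]_n).

Definition hyperplane (i : 'I_m) : 'M[R]_n := kermx (a i).

Definition flat (S : {set 'I_m}) : 'M[R]_n :=
  (\bigcap_(i in S) hyperplane i)%MS.

(* Every flat X is flat (fclosure S) where fclosure S is the set of all
   hyperplanes containing X; flats correspond bijectively to the closed
   index sets, which we use to index the (finite) lattice of flats. *)
Definition fclosure (S : {set 'I_m}) : {set 'I_m} :=
  [set i | (flat S <= hyperplane i)%MS].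

Definition fclosed (S : {set 'I_m}) : bool := fclosure S == S.

Definition flat_le (S T : {set 'I_m}) : bool :=
  [&& fclosed S, fclosed T & (flat S <= flat T)%MS].

Definition flat_bot : {set 'I_m} := setT.

Definition codim (S : {set 'I_m}) : nat := (n - \rank (flat S))%N.

Definition arr_rank : nat := codim flat_bot.

End Arrangement.

(* The fuel #|T| exceeds the length of any chain, so it is the true Möbius
   function when le is a partial order. *)
Fixpoint mobius_aux (T : finType) (le : rel T) (k : nat) (x y : T) : int :=
  if k is k'.+1 then
    if y == x then 1
    else if le x y then
      - \sum_(z : T | le x z && le z y && (z != y)) mobius_aux le k' x z
    else 0
  else 0.

Definition mobius (T : finType) (le : rel T) (x y : T) : int :=
  mobius_aux le #|T| x y.

Definition arr_poly (R : realType) (n m : nat) (a : 'I_m -> 'cV[R]_n) : {poly R} :=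
  \sum_(S : {set 'I_m} | fclosed a S)
     (`|mobius (flat_le a) (flat_bot m) S|%N)%:R *: ('X - 1) ^+ codim a S.

Definition real_rooted (R : realType) (p : {poly R}) : Prop :=
  exists (c : R) (rs : seq R), p = c *: \prod_(x <- rs) ('X - x%:P).

(* Grade the flats by their dimension above the bottom flat; a flat of level j
   has codimension r - j, so P_A(z) = sum_j s_j (z - 1)^(r - j) where s_j sums
   |mu(bot, X)| over the flats X of level j.  On levels 0, 1 and 2 the Moebius
   function equals 1, -1 and (number of level-1 flats below X) - 1.  With l the
   number of level-1 flats and e the sum of (number of level-1 flats below X) - 1
   over the level-2 flats X, this gives P_A = 1, z, z (z - 2 + l) in ranks 0, 1, 2,
   and in rank 3
     P_A(z) = z ((z - 1)^2 + (l - 1) (z - 1) + e + 1 - l),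
   whose quadratic factor has discriminant (l + 1)^2 - 4 (e + 1).
   In rank 3 the level-1 and level-2 flats are points and lines of the projective
   plane of the quotient by the bottom flat: two distinct lines meet in exactly
   one point.  Fixing a line L with t points, counting incidences gives
   e + 1 = t + sum over the points A off L of the number of lines through A, and
   each summand lies between 1 and t (the lines through A meet L in distinct
   points).  Hence l <= e + 1 and 4 (e + 1) <= 4 t (l - t + 1) <= (l + 1)^2. *)

From Pilot Require Import Defs.
From HB Require Import structures.
From mathcomp Require Import all_boot all_order all_algebra.
From mathcomp Require Import reals.
From mathcomp Require Import zify ring lra.
Set Implicit Arguments. Unset Strict Implicit. Unset Printing Implicit Defensive.
Import Order.TTheory GRing.Theory Num.Theory.

(** * Counting incidences of points and lines *)

Section PointLineCount.
Variables (T : finType) (pt ln : pred T) (inc : rel T).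

Definition points_on (X : T) : nat := #|[set A | pt A && inc A X]|.
Definition lines_through (A : T) : nat := #|[set X | ln X && inc A X]|.

Hypothesis point_on_line : forall A, pt A -> exists2 X, ln X & inc A X.
(* With X = Y this says that every line carries a point. *)
Hypothesis lines_meet :
  forall X Y, ln X -> ln Y -> exists2 A, pt A & inc A X && inc A Y.
Hypothesis line_through_points : forall A B X Y, pt A -> pt B -> ln X -> ln Y ->
  A != B -> inc A X -> inc B X -> inc A Y -> inc B Y -> X = Y.

Lemma points_on_gt0 X : ln X -> 0 < points_on X.
Proof.
move=> lnX; have [A ptA /andP[AX _]] := lines_meet lnX lnX.
by apply/card_gt0P; exists A; rewrite inE ptA.
Qed.

Lemma lines_through_gt0 A : pt A -> 0 < lines_through A.
Proof.
move=> ptA; have [X lnX AX] := point_on_line ptA.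
by apply/card_gt0P; exists X; rewrite inE lnX.
Qed.

Lemma sum_points_on :
  \sum_(X | ln X) points_on X = \sum_(A | pt A) lines_through A.
Proof.
rewrite /points_on /lines_through.
under eq_bigr do rewrite -sum1dep_card.
under [RHS]eq_bigr do rewrite -sum1dep_card.
rewrite (exchange_big_dep pt) /=; last by move=> X A _ /andP[].
by apply: eq_bigr => A ptA; apply: eq_bigl => X; rewrite ptA.
Qed.

Definition excess := \sum_(X | ln X) (points_on X).-1.

Section FixedLine.
Variable L : T.
Hypothesis lnL : ln L.

Lemma card_common_points X : ln X -> X != L ->
  #|[set A | pt A && inc A L && inc A X]| = 1.
Proof.
move=> lnX XL; have [A ptA /andP[AL AX]] := lines_meet lnL lnX.
apply/eqP/cards1P; exists A; apply/setP => B; rewrite !inE.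
apply/idP/eqP => [/andP[/andP[ptB BL] BX] | ->]; last by rewrite ptA AL AX.
apply/eqP; apply: contraNT XL => BA.
by rewrite (line_through_points ptB ptA lnX lnL BA BX AX BL AL).
Qed.

Lemma sum_lines_through_on :
  \sum_(A | pt A && inc A L) lines_through A = points_on L + #|ln|.-1.
Proof.
have -> : #|ln| = (\sum_(X | ln X && (X != L)) 1).+1.
  by rewrite -sum1_card (bigD1 L).
rewrite /lines_through; under eq_bigr do rewrite -sum1dep_card.
rewrite (exchange_big_dep ln) /=; last by move=> A X _ /andP[].
rewrite (bigD1 L) //=; congr (_ + _).
  rewrite /points_on -sum1dep_card; apply: eq_bigl => A.
  by rewrite lnL /= -andbA andbb.
apply: eq_bigr => X /andP[lnX XL]; rewrite sum1dep_card -(card_common_points lnX XL).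
by apply: eq_card => A; rewrite !inE lnX.
Qed.

Lemma lines_through_le_points_on A :
  pt A -> ~~ inc A L -> lines_through A <= points_on L.
Proof.
move=> ptA AL; rewrite /lines_through -sum1dep_card.
have meetL X : ln X && inc A X ->
    1 = \sum_(B | (pt B && inc B L) && inc B X) 1.
  move=> /andP[lnX AX]; rewrite sum1dep_card card_common_points //.
  by apply: contraNneq AL => <-.
rewrite (eq_bigr _ meetL) (exchange_big_dep (fun B => pt B && inc B L)) /=;
  last by move=> X B _ /andP[].
rewrite /points_on -sum1dep_card; apply: leq_sum => B /andP[ptB BL].
rewrite sum1dep_card; apply/card_le1_eqP => X Y; rewrite !inE.
move=> /andP[/andP[lnX AX] /andP[_ BX]] /andP[/andP[lnY AY] /andP[_ BY]].
apply: line_through_points ptA ptB lnY lnX _ AY BY AX BX.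
by apply: contraNneq AL => ->.
Qed.

Lemma excessE :
  excess.+1 = points_on L + \sum_(A | pt A && ~~ inc A L) lines_through A.
Proof.
have incid : excess + #|ln| = \sum_(X | ln X) points_on X.
  rewrite -sum1_card -big_split /=; apply: eq_bigr => X lnX.
  by rewrite addn1 prednK // points_on_gt0.
rewrite sum_points_on (bigID (inc ^~ L)) /= sum_lines_through_on in incid.
have : 0 < #|ln| by apply/card_gt0P; exists L.
lia.
Qed.

Lemma excess_bounds : #|pt| <= excess.+1 /\ 4 * excess.+1 <= #|pt|.+1 ^ 2.
Proof.
pose u := #|[set A | pt A && ~~ inc A L]|.
have ptE : #|pt| = points_on L + u.
  rewrite -!sum1_card /points_on /u -!sum1dep_card (bigID (inc ^~ L)) /=.
  by congr (_ + _); apply: eq_bigl => A; rewrite unfold_in.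
have lo : u <= \sum_(A | pt A && ~~ inc A L) lines_through A.
  rewrite /u -sum1dep_card; apply: leq_sum => A /andP[ptA _].
  exact: lines_through_gt0.
have hi : \sum_(A | pt A && ~~ inc A L) lines_through A <= u * points_on L.
  rewrite /u -sum1dep_card big_distrl /=; apply: leq_sum => A /andP[ptA AL].
  by rewrite mul1n lines_through_le_points_on.
rewrite excessE ptE; split; first lia.
by have := (nat_AGM2 (points_on L) u.+1).1; rewrite addnS; lia.
Qed.

End FixedLine.
End PointLineCount.

Local Open Scope ring_scope.

(** * Real-rooted polynomials *)

Lemma quadratic_real_roots (R : rcfType) (b c : R) : 4 * c <= b ^+ 2 ->
  exists y1 y2, y1 + y2 = b /\ y1 * y2 = c.
Proof.
move=> disc_ge0; pose s := Num.sqrt (b ^+ 2 - 4 * c).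
have s2 : s ^+ 2 = b ^+ 2 - 4 * c by rewrite sqr_sqrtr // subr_ge0.
exists ((b + s) / 2), ((b - s) / 2); split; first by field.
have -> : (b + s) / 2 * ((b - s) / 2) = (b ^+ 2 - s ^+ 2) / 4 by field.
by rewrite s2; field.
Qed.

Lemma real_rooted_rank2_poly (R : realType) (l : nat) : (0 < l)%N ->
  real_rooted (('X - 1) ^+ 2 + l%:R *: ('X - 1) + (l.-1)%:R%:A : {poly R}).
Proof.
move=> l_gt0; exists 1, [:: 0; 2 - l%:R].
rewrite !big_cons big_nil scale1r alg_polyC -subn1 natrB // -mul_polyC.
by rewrite !rmorphB /= polyC0 polyC1; ring.
Qed.

Lemma real_rooted_rank3_poly (R : realType) (l e : nat) :
  (l <= e.+1)%N -> (4 * e.+1 <= l.+1 ^ 2)%N ->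
  real_rooted (('X - 1) ^+ 3 + l%:R *: ('X - 1) ^+ 2 + e%:R *: ('X - 1)
               + (e.+1 - l)%:R%:A : {poly R}).
Proof.
move=> l_le; rewrite -(ler_nat R) natrM natrX !mulrSr => disc.
have [|y1 [y2 [sum_y prod_y]]] := @quadratic_real_roots R (1 - l%:R) (e%:R + 1 - l%:R).
  by nra.
exists 1, [:: 0; 1 + y1; 1 + y2].
rewrite natrB // mulrSr.
have -> : e%:R = y1 * y2 - y1 - y2 :> R by lra.
have -> : l%:R = 1 - y1 - y2 :> R by lra.
rewrite !big_cons big_nil scale1r alg_polyC -!mul_polyC.
by rewrite !rmorphB !rmorphD !rmorphM /= polyC0 polyC1; ring.
Qed.

(** * The lattice of flats *)

Lemma rank_capmx_ge (F : fieldType) k l n (A : 'M[F]_(k, n)) (B : 'M[F]_(l, n)) :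
  (\rank A + \rank B <= n + \rank (A :&: B))%N.
Proof. by rewrite -mxrank_sum_cap leq_add2r rank_leq_col. Qed.

Section Flats.
Variables (R : realType) (n m : nat) (a : 'I_m -> 'cV[R]_n).

Local Notation F := (flat a).
Local Notation H := (hyperplane a).
Local Notation cl := (Defs.fclosed a).
Local Notation fcl := (Defs.fclosure a).

Lemma rank_hyperplane_ge i : (n.-1 <= \rank (H i))%N.
Proof. by rewrite /hyperplane mxrank_ker -subn1 leq_sub2l // rank_leq_col. Qed.

Lemma flat_subset (S T : {set 'I_m}) : S \subset T -> (F T <= F S)%MS.
Proof.
move=> ST; apply/sub_bigcapmxP => i iS.
by apply: (bigcapmx_inf i); [exact: (subsetP ST) | exact: submx_refl].
Qed.

Lemma flat_setT_sub (S : {set 'I_m}) : (F setT <= F S)%MS.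
Proof. exact/flat_subset/subsetT. Qed.

Lemma flat_sub_hyperplane (S : {set 'I_m}) i : i \in S -> (F S <= H i)%MS.
Proof. by move=> iS; apply: (bigcapmx_inf i). Qed.

Lemma flat_set0 : F set0 = 1%:M.
Proof. by rewrite /flat big_pred0 // => i; rewrite inE. Qed.

Lemma flat_set1 i : F [set i] = H i.
Proof. by rewrite /flat big_set1. Qed.

Lemma flat_setU (S T : {set 'I_m}) : (F (S :|: T) == F S :&: F T)%MS.
Proof.
rewrite sub_capmx !flat_subset ?subsetUl ?subsetUr //=.
apply/sub_bigcapmxP => i; rewrite inE => /orP[iS | iT].
  exact: submx_trans (capmxSl _ _) (flat_sub_hyperplane iS).
exact: submx_trans (capmxSr _ _) (flat_sub_hyperplane iT).
Qed.

Lemma flat_fclosure (S : {set 'I_m}) : (F (fcl S) == F S)%MS.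
Proof.
apply/andP; split; last by apply/sub_bigcapmxP => i; rewrite inE.
by apply: flat_subset; apply/subsetP => i iS; rewrite inE flat_sub_hyperplane.
Qed.

Lemma flat_fclosure_setU (S T : {set 'I_m}) : (F (fcl (S :|: T)) :=: F S :&: F T)%MS.
Proof. exact: eqmx_trans (eqmxP (flat_fclosure _)) (eqmxP (flat_setU _ _)). Qed.

Lemma fclosure_closed (S : {set 'I_m}) : cl (fcl S).
Proof. by apply/eqP/setP => i; rewrite !inE (eqmxP (flat_fclosure S)). Qed.

Lemma fclosedP (X : {set 'I_m}) i : cl X -> (i \in X) = (F X <= H i)%MS.
Proof. by move=> /eqP {1}<-; rewrite inE. Qed.

Lemma fclosedT : cl setT.
Proof. by apply/eqP/setP => i; rewrite !inE flat_sub_hyperplane ?inE. Qed.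

Lemma fclosed_inj (S T : {set 'I_m}) : cl S -> cl T -> (F S == F T)%MS -> S = T.
Proof.
move=> cS cT /eqmxP eqST; apply/setP => i.
by rewrite (fclosedP _ cS) (fclosedP _ cT) eqST.
Qed.

Lemma fclosed_rank_inj (S T : {set 'I_m}) : cl S -> cl T -> (F S <= F T)%MS ->
  \rank (F S) = \rank (F T) -> S = T.
Proof.
move=> cS cT le_ST eq_r; apply: fclosed_inj => //.
by rewrite -(mxrank_leqif_eq le_ST) eq_r.
Qed.

Lemma fclosed_rank_lt (S T : {set 'I_m}) : cl S -> cl T -> (F S <= F T)%MS ->
  S != T -> (\rank (F S) < \rank (F T))%N.
Proof.
move=> cS cT le_ST; rewrite ltn_neqAle mxrankS // andbT.
by apply: contraNN => /eqP eq_r; apply/eqP; apply: fclosed_rank_inj.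
Qed.

Lemma rank_flat_ge (S : {set 'I_m}) : (n <= \rank (F S) + #|S|)%N.
Proof.
suff /(_ (enum S)) : forall s,
    (n <= \rank (\big[capmx/1%:M]_(i <- s) H i) + size s)%N.
  by rewrite big_enum /= -cardE.
elim=> [|i s IHs]; first by rewrite big_nil mxrank1 addn0.
rewrite big_cons /=; have := rank_capmx_ge (H i) (\big[capmx/1%:M]_(j <- s) H j).
have := rank_hyperplane_ge i; rewrite -subn1.
by move: (\rank (H i)) (\rank (H i :&: _)) => x z; lia.
Qed.

Hypothesis a_neq0 : forall i, a i != 0.

Lemma rank_hyperplane i : \rank (H i) = n.-1.
Proof.
rewrite /hyperplane mxrank_ker -subn1; congr (_ - _)%N.
by apply/eqP; rewrite eqn_leq rank_leq_col lt0n mxrank_eq0 a_neq0.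
Qed.

Lemma hyperplane_proper i : ~~ (1%:M <= H i)%MS.
Proof.
apply/negP => /mxrankS; rewrite mxrank1 rank_hyperplane.
by have := rank_leq_row (a i); have := a_neq0 i; rewrite -mxrank_eq0; lia.
Qed.

Lemma fclosed0 : cl set0.
Proof.
by apply/eqP/setP => i; rewrite !inE flat_set0 (negbTE (hyperplane_proper i)).
Qed.

Lemma fclosed_rank_top (S : {set 'I_m}) : cl S -> \rank (F S) = n -> S = set0.
Proof.
move=> cS rS; apply: fclosed_rank_inj fclosed0 _ _; rewrite // flat_set0 ?submx1 //.
by rewrite mxrank1.
Qed.

Lemma rank_capmx_hyperplane k (M : 'M_(k, n)) i :
  ~~ (M <= H i)%MS -> \rank (M :&: H i) = (\rank M).-1.
Proof.
move=> MH; have := mxrank_sum_cap M (H i); rewrite rank_hyperplane.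
have : (H i < M + H i)%MS by rewrite ltmxE addsmxSr addsmx_sub negb_and MH.
rewrite ltmxErank rank_hyperplane => /andP[_]; have := rank_leq_col (M + H i)%MS.
by rewrite -!subn1; move: (\rank _) (\rank _) (\rank _) => x y z; lia.
Qed.

Lemma fclosed_step_down (X : {set 'I_m}) : cl X -> X != setT ->
  exists A, [/\ cl A, (F A <= F X)%MS & \rank (F A) = (\rank (F X)).-1].
Proof.
move=> cX; rewrite -subTset => /subsetPn[i _ iX]; exists (fcl (X :|: [set i])).
rewrite fclosure_closed (eqmxP (flat_fclosure _)) (eqmx_rank (flat_fclosure _)).
rewrite (eqmxP (flat_setU _ _)) (eqmx_rank (flat_setU _ _)) flat_set1 capmxSl.
by rewrite rank_capmx_hyperplane // -(fclosedP _ cX).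
Qed.

Local Notation d0 := (\rank (F setT)).

Definition level (j : nat) (S : {set 'I_m}) : bool :=
  cl S && (\rank (F S) == d0 + j)%N.

Lemma level_fclosed j S : level j S -> cl S.
Proof. by case/andP. Qed.

Lemma level_rank j S : level j S -> \rank (F S) = (d0 + j)%N.
Proof. by case/andP=> _ /eqP. Qed.

Lemma level_inj j k S : level j S -> level k S -> j = k.
Proof. by move=> /level_rank rj /level_rank; rewrite rj => /addnI. Qed.

Lemma level0E S : level 0 S = (S == setT).
Proof.
apply/idP/eqP => [lS | ->]; last by rewrite /level fclosedT addn0 eqxx.
apply/esym/fclosed_rank_inj; first exact: fclosedT.
- exact: level_fclosed lS.
- exact: flat_setT_sub.
- by rewrite (level_rank lS) addn0.
Qed.

Lemma level_arr_rank S : level (arr_rank a) S = (S == set0).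
Proof.
rewrite /arr_rank /codim /flat_bot /level subnKC ?rank_leq_col //.
apply/andP/eqP => [[cS /eqP] | ->]; first exact: fclosed_rank_top.
by rewrite fclosed0 flat_set0 mxrank1.
Qed.

Lemma level_leq_arr_rank j S : level j S -> (j <= arr_rank a)%N.
Proof.
move=> lS; have := rank_leq_col (F S).
rewrite (level_rank lS) /arr_rank /codim /flat_bot.
by move: (\rank _) => d; lia.
Qed.

Lemma codim_level j S : level j S -> codim a S = (arr_rank a - j)%N.
Proof. by move=> lS; rewrite /arr_rank /codim (level_rank lS) subnDA. Qed.

Lemma sum_fclosed_by_level (V : nmodType) k (P : pred {set 'I_m})
    (f : {set 'I_m} -> V) :
  (forall S, cl S -> P S -> \rank (F S) <= d0 + k)%N ->
  \sum_(S | cl S && P S) f S = \sum_(j < k.+1) \sum_(S | level j S && P S) f S.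
Proof.
move=> rank_le.
rewrite (partition_big (fun S => inord (\rank (F S) - d0) : 'I_k.+1) xpredT) //.
apply: eq_bigr => j _; apply: eq_bigl => S; rewrite /level.
case cS: (cl S) => //=; case PS: (P S); rewrite ?andbF ?andbT //.
have := mxrankS (flat_setT_sub S); have := rank_le S cS PS.
move: (\rank (F S)) d0 => r d r_le d_le.
by rewrite -(inj_eq val_inj) /= inordK; [apply/eqP/eqP | ]; lia.
Qed.

(** * The Moebius function on the lowest levels *)

Local Notation le := (flat_le a).
Local Notation mob := (mobius le (flat_bot m)).

Lemma flat_le_setT S : le setT S = cl S.
Proof. by rewrite /flat_le fclosedT flat_setT_sub !andbT. Qed.

Lemma flat_le_set0 S : le S set0 = cl S.
Proof. by rewrite /flat_le fclosed0 flat_set0 submx1 !andbT. Qed.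

Lemma mobius_auxS k x y : mobius_aux le k.+1 x y =
  if y == x then 1 else if le x y then
    - \sum_(z | le x z && le z y && (z != y)) mobius_aux le k x z else 0.
Proof. by []. Qed.

Lemma mobius_aux_rec k j X : level j.+1 X ->
  mobius_aux le k.+1 setT X =
    - \sum_(i < j.+1) \sum_(Z | level i Z && le Z X) mobius_aux le k setT Z.
Proof.
move=> lX; have cX := level_fclosed lX.
have XT : X != setT by rewrite -level0E; apply/negP => /(level_inj lX).
rewrite mobius_auxS (negbTE XT) flat_le_setT cX; congr -%R.
under eq_bigl do rewrite flat_le_setT -andbA.
rewrite (@sum_fclosed_by_level _ j) => [|Z cZ /andP[le_ZX ZX]].
  apply: eq_bigr => i _; apply: eq_bigl => Z; case lZ: (level i Z) => //=.
  apply: andb_idr => _; apply: contraTneq lZ => ->; apply/negP => /(level_inj lX) ji.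
  by have := ltn_ord i; rewrite -ji ltnn.
case/and3P: le_ZX => _ _ sub_ZX.
by have := fclosed_rank_lt cZ cX sub_ZX ZX; rewrite (level_rank lX) addnS ltnS.
Qed.

Lemma mobius_aux_stable j k X : level j X -> (j < k)%N ->
  mobius_aux le k setT X = mobius_aux le j.+1 setT X.
Proof.
elim/ltn_ind: j k X => j IHj [|k] X lX lt_jk //.
case: j IHj lX lt_jk => [|j] IHj lX lt_jk.
  by move: lX; rewrite level0E => /eqP->; rewrite !mobius_auxS eqxx.
rewrite !(mobius_aux_rec _ lX); congr -%R; apply: eq_bigr => i _.
apply: eq_bigr => Z /andP[lZ _]; have lt_ij := ltn_ord i.
by rewrite (IHj i lt_ij k Z lZ) ?(IHj i lt_ij j.+1 Z lZ) //; lia.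
Qed.

Lemma level_lt_card j S : level j S -> (j < #|{set 'I_m}|)%N.
Proof.
move=> /level_leq_arr_rank; have := rank_flat_ge setT.
have : (2 ^ m <= #|{set 'I_m}|)%N.
  by rewrite -{1}(card_ord m) -cardsT -card_powerset max_card.
have := ltn_expl m (ltnSn 1); rewrite cardsT card_ord /arr_rank /codim /flat_bot.
by move: (\rank _) => d; lia.
Qed.

Lemma mobiusE j S : level j S -> mob S = mobius_aux le j.+1 setT S.
Proof. by move=> lS; rewrite /mobius (mobius_aux_stable lS) // (level_lt_card lS). Qed.

Lemma mobius_rec j X : level j.+1 X ->
  mob X = - \sum_(i < j.+1) \sum_(Z | level i Z && le Z X) mob Z.
Proof.
move=> lX; rewrite (mobiusE lX) (mobius_aux_rec _ lX); congr -%R.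
apply: eq_bigr => i _; apply: eq_bigr => Z /andP[lZ _].
by rewrite (mobiusE lZ) (mobius_aux_stable lZ).
Qed.

Local Notation npts := (points_on (level 1) le).

Lemma mobius_setT : mob setT = 1.
Proof. by rewrite (@mobiusE 0) ?level0E // mobius_auxS eqxx. Qed.

Lemma sum_mobius_level0 X : cl X -> \sum_(Z | level 0 Z && le Z X) mob Z = 1.
Proof.
move=> cX; rewrite (eq_bigl (pred1 setT)) ?big_pred1_eq ?mobius_setT // => Z.
by rewrite level0E /=; case: eqP => // ->; rewrite flat_le_setT.
Qed.

Lemma mobius_level1 X : level 1 X -> mob X = -1.
Proof.
move=> lX; rewrite (mobius_rec lX) big_ord1.
by rewrite sum_mobius_level0 // (level_fclosed lX).
Qed.

Lemma sum_mobius_level1 X : \sum_(Z | level 1 Z && le Z X) mob Z = - (npts X)%:Z.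
Proof.
rewrite (eq_bigr (fun=> -1)) => [|Z /andP[lZ _]]; last exact: mobius_level1.
by rewrite sumrN /points_on -sum1dep_card -natz natr_sum.
Qed.

Lemma mobius_level2 X : level 2 X -> mob X = (npts X)%:Z - 1.
Proof.
move=> lX; rewrite (mobius_rec lX) !big_ord_recl big_ord0 /bump /=.
rewrite sum_mobius_level0 ?sum_mobius_level1 ?(level_fclosed lX) //.
by rewrite addr0 opprD opprK addrC.
Qed.

Lemma mobius_level3 X : level 3 X -> mob X =
  - (1 - (npts X)%:Z + \sum_(Y | level 2 Y && le Y X) ((npts Y)%:Z - 1)).
Proof.
move=> lX; rewrite (mobius_rec lX) !big_ord_recl big_ord0 /bump /=.
rewrite sum_mobius_level0 ?sum_mobius_level1 ?(level_fclosed lX) // addr0 addrA.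
by congr (- (_ + _)); apply: eq_bigr => Y /andP[lY _]; rewrite mobius_level2.
Qed.

(** * The polynomial P_A by levels *)

Local Notation level_sum j := (\sum_(S | level j S) `|mob S|%N).
Local Notation r := (arr_rank a).

Lemma arr_poly_levels :
  arr_poly a = \sum_(j < r.+1) (level_sum j)%:R *: ('X - 1) ^+ (r - j).
Proof.
rewrite /arr_poly (eq_bigl (fun S => cl S && true)) => [|S]; last by rewrite andbT.
rewrite (@sum_fclosed_by_level _ r) => [|S _ _]; last first.
  by rewrite /arr_rank /codim /flat_bot subnKC ?rank_leq_col.
apply: eq_bigr => j _; rewrite natr_sum scaler_suml.
by apply: eq_big => [S | S /andP[lS _]]; rewrite ?andbT ?(codim_level lS).
Qed.

Lemma level_sum0 : level_sum 0 = 1%N.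
Proof. by rewrite (eq_bigl _ _ level0E) big_pred1_eq mobius_setT. Qed.

Lemma level_sum1 : level_sum 1 = #|level 1|.
Proof. by rewrite -sum1_card; apply: eq_bigr => S lS; rewrite mobius_level1. Qed.

Lemma level_step_down j X : level j.+1 X -> exists2 A, level j A & le A X.
Proof.
move=> lX; have [|A [cA sub_AX rA]] := fclosed_step_down (level_fclosed lX).
  by rewrite -level0E; apply/negP => /(level_inj lX).
exists A; first by rewrite /level cA rA (level_rank lX) addnS /= eqxx.
by rewrite /flat_le cA (level_fclosed lX).
Qed.

Lemma points_on_level2_gt0 X : level 2 X -> (0 < npts X)%N.
Proof.
by case/level_step_down => A lA le_AX; apply/card_gt0P; exists A; rewrite inE lA.
Qed.

Lemma level_sum2 : level_sum 2 = excess (level 1) (level 2) le.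
Proof.
rewrite /excess; apply: eq_bigr => X lX; rewrite mobius_level2 //.
have := points_on_level2_gt0 lX; case: (npts X) => // k _.
by rewrite -[k.+1 in LHS]addn1 PoszD addrK.
Qed.

Lemma points_on_set0 : npts set0 = #|level 1|.
Proof.
apply: eq_card => A; rewrite inE flat_le_set0.
by case lA: (level 1 A); rewrite // (level_fclosed lA).
Qed.

Lemma arr_poly_rank0 : r = 0%N -> arr_poly a = 1.
Proof.
move=> r0; rewrite arr_poly_levels r0 big_ord_recl big_ord0 level_sum0.
by rewrite scale1r addr0.
Qed.

Lemma arr_poly_rank1 : r = 1%N -> arr_poly a = 'X.
Proof.
move=> r1; have top := level_arr_rank; rewrite r1 in top.
rewrite arr_poly_levels r1 !big_ord_recl big_ord0 /= /bump /=.
rewrite ?addn0 ?add1n ?subSS ?subn0 ?subnn level_sum0 (eq_bigl _ _ top) big_pred1_eq.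
by rewrite mobius_level1 ?top // scale1r expr1 expr0 addr0 /= scale1r subrK.
Qed.

Lemma arr_poly_rank2 : r = 2%N -> arr_poly a =
  ('X - 1) ^+ 2 + #|level 1|%:R *: ('X - 1) + (#|level 1|.-1)%:R%:A.
Proof.
move=> r2; have top := level_arr_rank; rewrite r2 in top.
rewrite arr_poly_levels r2 !big_ord_recl big_ord0 /= /bump /=.
rewrite ?addn0 ?add1n ?subSS ?subn0 ?subnn level_sum0 level_sum1 level_sum2.
rewrite /excess (eq_bigl _ _ top) big_pred1_eq points_on_set0.
by rewrite scale1r expr1 addr0 addrA.
Qed.

Section Rank3.
Hypothesis r3 : r = 3%N.

Lemma rank3_dim : n = (d0 + 3)%N.
Proof. by rewrite -r3 /arr_rank /codim /flat_bot subnKC ?rank_leq_col. Qed.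

Lemma fclosure_set1_level2 i : level 2 (fcl [set i]).
Proof.
rewrite /level fclosure_closed (eqmx_rank (flat_fclosure _)) flat_set1.
rewrite rank_hyperplane -subn1; have := rank3_dim.
by move: d0 => d dim; apply/eqP; lia.
Qed.

Lemma level2_above A : level 1 A -> exists2 X, level 2 X & le A X.
Proof.
move=> lA; have cA := level_fclosed lA.
have /set0Pn[i iA] : A != set0.
  by rewrite -level_arr_rank r3; apply/negP => /(level_inj lA).
exists (fcl [set i]); first exact: fclosure_set1_level2.
rewrite /flat_le cA fclosure_closed (eqmxP (flat_fclosure _)) flat_set1.
by rewrite -fclosedP.
Qed.

Lemma rank_meet_level2 X Y : level 2 X -> level 2 Y -> X != Y ->
  \rank (F X :&: F Y) = (d0 + 1)%N.
Proof.
move=> lX lY XY; have := rank_capmx_ge (F X) (F Y).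
have := ltn_leqif (mxrank_leqif_sup (capmxSl (F X) (F Y))).
rewrite sub_capmx submx_refl /= => lt_XY.
have sub_XY : ~~ (F X <= F Y)%MS.
  apply: contraNN XY => sub_XY; apply/eqP/fclosed_rank_inj => //.
  - exact: level_fclosed lX.
  - exact: level_fclosed lY.
  - by rewrite (level_rank lX) (level_rank lY).
move: lt_XY; rewrite (negbTE sub_XY) (level_rank lX) (level_rank lY) /=.
by have := rank3_dim; move: d0 (\rank _) => d x; lia.
Qed.

Lemma level2_meet X Y :
  level 2 X -> level 2 Y -> exists2 A, level 1 A & le A X && le A Y.
Proof.
move=> lX lY; have [<- | XY] := eqVneq X Y.
  by case/level_step_down: lX => A lA le_AX; exists A; rewrite ?le_AX.
exists (fcl (X :|: Y)).
  by rewrite /level fclosure_closed flat_fclosure_setU rank_meet_level2 ?eqxx.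
rewrite /flat_le fclosure_closed (level_fclosed lX) (level_fclosed lY).
by rewrite !flat_fclosure_setU capmxSl capmxSr.
Qed.

Lemma level2_unique A B X Y : level 1 A -> level 1 B -> level 2 X -> level 2 Y ->
  A != B -> le A X -> le B X -> le A Y -> le B Y -> X = Y.
Proof.
move=> lA lB lX lY AB /and3P[_ _ AX] /and3P[_ _ BX] /and3P[_ _ AY] /and3P[_ _ BY].
apply/eqP; apply: contraNT AB => XY.
have meetE C : level 1 C -> (F C <= F X)%MS -> (F C <= F Y)%MS ->
    (F C == F X :&: F Y)%MS.
  move=> lC CX CY; have sub_C : (F C <= F X :&: F Y)%MS by rewrite sub_capmx CX.
  by rewrite -(mxrank_leqif_eq sub_C) (level_rank lC) rank_meet_level2.
apply/eqP/fclosed_inj; [exact: level_fclosed lA | exact: level_fclosed lB |].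
apply/eqmxP; apply: eqmx_trans (eqmxP (meetE A lA AX AY)) _.
exact/eqmx_sym/eqmxP/meetE.
Qed.

Lemma rank3_excess_bounds : (#|level 1| <= (excess (level 1) (level 2) le).+1)%N /\
  (4 * (excess (level 1) (level 2) le).+1 <= #|level 1|.+1 ^ 2)%N.
Proof.
have [|L lL _] := @level_step_down 2 set0; first by rewrite -r3 level_arr_rank.
by have := excess_bounds level2_above level2_meet level2_unique lL.
Qed.

Lemma arr_poly_rank3 : arr_poly a =
  ('X - 1) ^+ 3 + #|level 1|%:R *: ('X - 1) ^+ 2
  + (excess (level 1) (level 2) le)%:R *: ('X - 1)
  + ((excess (level 1) (level 2) le).+1 - #|level 1|)%:R%:A.
Proof.
have top := level_arr_rank; rewrite r3 in top.
rewrite arr_poly_levels r3 !big_ord_recl big_ord0 /= /bump /=.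
rewrite ?addn0 ?add1n ?subSS ?subn0 ?subnn level_sum0 level_sum1 level_sum2.
rewrite (eq_bigl _ _ top) big_pred1_eq mobius_level3 ?top // points_on_set0.
have -> : \sum_(Y | level 2 Y && le Y set0) ((npts Y)%:Z - 1) =
          (excess (level 1) (level 2) le)%:Z.
  rewrite /excess -natz natr_sum; apply: eq_big => [Y | Y /andP[lY _]].
    by rewrite flat_le_set0; case lY: (level 2 Y); rewrite // (level_fclosed lY).
  by rewrite natz predn_int ?points_on_level2_gt0.
have [+ _] := rank3_excess_bounds; move: #|_| (excess _ _ _) => l e l_le.
have -> : `|- (1 - l%:Z + e%:Z)|%N = (e.+1 - l)%N by lia.
by rewrite scale1r expr1 addr0 !addrA.
Qed.

End Rank3.

End Flats.

Unset Implicit Arguments.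

Theorem theorem9p1 (R : realType) (n m : nat) (a : 'I_m -> 'cV[R]_n) :
  (forall i, a i != 0) ->
  (arr_rank a <= 3)%N ->
  real_rooted (arr_poly a).
Proof.
move=> a_neq0; case r_eq: (arr_rank a) => [|[|[|[|r]]]] // _.
- by rewrite arr_poly_rank0 //; exists 1, [::]; rewrite big_nil scale1r.
- by rewrite arr_poly_rank1 //; exists 1, [:: 0]; rewrite big_seq1 scale1r subr0.
- rewrite arr_poly_rank2 //; apply: real_rooted_rank2_poly.
  by rewrite -points_on_set0 // points_on_level2_gt0 // -r_eq level_arr_rank.
- rewrite arr_poly_rank3 //; have [] := rank3_excess_bounds a_neq0 r_eq.
  exact: real_rooted_rank3_poly.
Qed.
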